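(* Let $({\cal A},{\cal A}_0)$ be a locally convex quasi *-algebra with identity and topology $\tau$, let $\omega_0$ be a positive linear functional on ${\cal A}_0$ with $\omega_0(a^*a)\le p(a)^2$ for all $a\in{\cal A}_0$ for some $\tau$-continuous seminorm $p$, let $\omega=\tilde\omega_0$ be its continuous extension to ${\cal A}$ and $\pi_\omega$ its GNS representation. Then $\pi_\omega({\cal A})'_w=\pi_\omega({\cal A}_0)'_w$.
   Context: A locally convex quasi *-algebra $({\cal A},{\cal A}_0)$: ${\cal A}_0$ is a *-algebra with a locally convex topology $\tau$ making the involution and the multiplications $a\mapsto ab$, $a\mapsto ba$ ($b\in{\cal A}_0$) continuous, ${\cal A}$ is the $\tau$-completion with involution and products $ax,xa$ ($a\in{\cal A},x\in{\cal A}_0$) extended by continuity. GNS construction of $\omega$: Hilbert space ${\cal H}_\omega$, linear $\lambda_\omega:{\cal A}\to{\cal H}_\omega$ with ${\cal D}:=\lambda_\omega({\cal A}_0)$ dense and $\langle\lambda_\omega(x),\lambda_\omega(a)\rangle=\omega(a^*x)$, and $\pi_\omega(x)$, $x\in{\cal A}$, the operator on ${\cal D}$ given by $\pi_\omega(x)\lambda_\omega(a)=\lambda_\omega(xa)$, with $\pi_\omega(x)^\dagger:=\pi_\omega(x)^*\upharpoonright{\cal D}=\pi_\omega(x^* )$. For a *-invariant set ${\mathfrak M}$ of operators with domain ${\cal D}$, the weak commutant is ${\mathfrak M}'_w=\{C\in{\cal B}({\cal H}_\omega):\langle X\xi,C^*\eta\rangle=\langle C\xi,X^\dagger\eta\rangle\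 \forall X\in{\mathfrak M},\ \xi,\eta\in{\cal D}\}$. *)

From mathcomp Require Import all_boot all_order all_algebra.
From mathcomp Require Import reals complex.
Set Implicit Arguments. Unset Strict Implicit. Unset Printing Implicit Defensive.
Import Order.TTheory GRing.Theory Num.Theory.
Local Open Scope ring_scope.

Section LCQSA.
Context {R : realType}.
Local Notation C := (R[i]).

Definition clinear (V W : lmodType C) (f : V -> W) :=
  forall (k : C) (x y : V), f (k *: x + y) = k *: f x + f y.

Definition cfunctional (V : lmodType C) (f : V -> C) :=
  forall (k : C) (x y : V), f (k *: x + y) = k * f x + f y.

(** ** Seminorms (real-valued, the reals being embedded in C) *)
Definition seminorm (V : lmodType C) (p : V -> C) :=
  [/\ forall x, 0 <= p x,
      forall x y, p (x + y) <= p x + p y &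
      forall (k : C) x, p (k *: x) = `|k| * p x].

(** ** The locally convex topology generated by a family of seminorms
    [q : I -> V -> C]. *)
Definition sn_ball (V : lmodType C) (I : Type) (q : I -> V -> C)
    (n : nat) (f : 'I_n -> I) (d : C) (x y : V) :=
  forall k : 'I_n, q (f k) (y - x) < d.

Definition sn_continuous (V W : lmodType C) (I J : Type)
    (qV : I -> V -> C) (qW : J -> W -> C) (g : V -> W) :=
  forall (x : V) (i : J) (e : C), 0 < e ->
    exists n (f : 'I_n -> I) (d : C), 0 < d /\
      forall y, sn_ball qV f d x y -> qW i (g y - g x) < e.

Definition sn_continuous_C (V : lmodType C) (I : Type)
    (qV : I -> V -> C) (g : V -> C) :=
  forall (x : V) (e : C), 0 < e ->
    exists n (f : 'I_n -> I) (d : C), 0 < d /\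
      forall y, sn_ball qV f d x y -> `|g y - g x| < e.

Definition sn_separated (V : lmodType C) (I : Type) (q : I -> V -> C) :=
  forall x : V, (forall i, q i x = 0) -> x = 0.

Definition sn_dense (V0 V : lmodType C) (I : Type) (q : I -> V -> C)
    (j : V0 -> V) :=
  forall (x : V) n (f : 'I_n -> I) (e : C), 0 < e ->
    exists a : V0, sn_ball q f e x (j a).

Definition sn_complete (V : lmodType C) (I : Type) (q : I -> V -> C) :=
  forall (D : Type) (le : D -> D -> Prop),
    inhabited D ->
    (forall a, le a a) ->
    (forall a b c, le a b -> le b c -> le a c) ->
    (forall a b, exists c, le a c /\ le b c) ->
    forall u : D -> V,
      (forall i (e : C), 0 < e -> exists d0, forall d1 d2,
          le d0 d1 -> le d0 d2 -> q i (u d1 - u d2) < e) ->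
      exists y : V, forall i (e : C), 0 < e -> exists d0, forall d,
          le d0 d -> q i (u d - y) < e.

(** ** Locally convex quasi *-algebras with identity.
   [A0] is a unital *-algebra (involution [inv0]) with the locally convex
   topology tau generated by the seminorms [q]; [A] is its completion:
   a complete Hausdorff locally convex space with seminorms [qA], into
   which [A0] embeds (via [j]) isometrically for every seminorm and densely;
   [invA], [lm] ( [lm x b] = x b ) and [rm] ( [rm b x] = b x ),
   for x in A, b in A0, are the extensions by continuity of the
   involution and of the multiplications. *)
Record lc_quasi_star_algebra (A0 : algType C) (inv0 : A0 -> A0)
    (I : Type) (q : I -> A0 -> C) (A : lmodType C) (j : A0 -> A)
    (qA : I -> A -> C) (invA : A -> A) (lm : A -> A0 -> A)
    (rm : A0 -> A -> A) : Prop := {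
  inv0_invol : forall a, inv0 (inv0 a) = a;
  inv0_add : forall a b, inv0 (a + b) = inv0 a + inv0 b;
  inv0_antilin : forall (k : C) a, inv0 (k *: a) = k^* *: inv0 a;
  inv0_mul : forall a b, inv0 (a * b) = inv0 b * inv0 a;
  q_seminorm : forall i, seminorm (q i);
  inv0_cont : sn_continuous q q inv0;
  mulr_cont : forall b : A0, sn_continuous q q (fun a => a * b);
  mull_cont : forall b : A0, sn_continuous q q (fun a => b * a);
  qA_seminorm : forall i, seminorm (qA i);
  j_lin : clinear j;
  j_inj : injective j;
  qA_j : forall i a, qA i (j a) = q i a;
  A_separated : sn_separated qA;
  A_complete : sn_complete qA;
  A0_dense : sn_dense qA j;
  invA_cont : sn_continuous qA qA invA;
  invA_j : forall a, invA (j a) = j (inv0 a);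
  lm_cont : forall b : A0, sn_continuous qA qA (fun x => lm x b);
  lm_j : forall a b, lm (j a) b = j (a * b);
  rm_cont : forall b : A0, sn_continuous qA qA (fun x => rm b x);
  rm_j : forall a b, rm b (j a) = j (b * a)
}.

(** ** Complex Hilbert spaces (inner product linear in the first slot) *)
Definition hnorm (H : lmodType C) (ip : H -> H -> C) (x : H) : C :=
  sqrtC (ip x x).

Definition hilbert_space (H : lmodType C) (ip : H -> H -> C) :=
  [/\ forall (k : C) (x y z : H), ip (k *: x + y) z = k * ip x z + ip y z,
      forall x y, ip y x = (ip x y)^*,
      forall x, 0 <= ip x x,
      forall x, ip x x = 0 -> x = 0 &
      forall u : nat -> H,
        (forall e : C, 0 < e -> exists N, forall m n, (N <= m)%N -> (N <= n)%N ->
            hnorm ip (u m - u n) < e) ->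
        exists h, forall e : C, 0 < e -> exists N, forall n, (N <= n)%N ->
            hnorm ip (u n - h) < e].

Definition bounded_op (H : lmodType C) (ip : H -> H -> C) (T : H -> H) :=
  clinear T /\ exists M : C, forall x, hnorm ip (T x) <= M * hnorm ip x.

Definition is_adjoint (H : lmodType C) (ip : H -> H -> C) (T Ts : H -> H) :=
  forall x y, ip (T x) y = ip x (Ts y).

Definition dense_in (H : lmodType C) (ip : H -> H -> C) (X : Type)
    (g : X -> H) :=
  forall (h : H) (e : C), 0 < e -> exists x, hnorm ip (h - g x) < e.

(** With the GNS data ([lam] = lambda_omega, D = lam (j A0)),
   [pi x] acts on D by [pi x (lam (j a)) = lam (lm x a)] and
   [pi x]^dagger = [pi (invA x)].  So C belongs to the weak commutant iff
   C is in B(H) and, C^* denoting its adjoint,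
   <pi(x) xi, C^* eta> = <C xi, pi(x)^dagger eta> for all x in S and
   xi = lam (j a), eta = lam (j b) in D. *)
Definition pi_weak_commutant (A0 : algType C) (A : lmodType C)
    (H : lmodType C) (ip : H -> H -> C) (j : A0 -> A) (lam : A -> H)
    (invA : A -> A) (lm : A -> A0 -> A) (S : A -> Prop) (T : H -> H) :=
  bounded_op ip T /\
  exists Ts : H -> H, is_adjoint ip T Ts /\
    forall x, S x -> forall a b : A0,
      ip (lam (lm x a)) (Ts (lam (j b))) = ip (T (lam (j a))) (lam (lm (invA x) b)).

End LCQSA.

(* The GNS map [lam] is continuous from (A, tau) to H with its weak topology,
   so for fixed [a, b] both sides of the weak-commutant identity are continuous
   functions of [x]; they agree on the dense subspace [j A0], hence everywhere.
   Weak continuity reduces to boundedness of [<lam z, lam z>] near [0]: choose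
   [c] with [lam (j c)] close to [lam z]; since [<lam z, lam (j c)>] =
   [om (c^* z)] is continuous in [z], it can be compared with its value at an
   [a] in [A0] near [z], where [<lam (j a), lam (j a)> <= p a ^ 2] is small,
   and AM-GM closes the estimate. *)
From mathcomp Require Import all_boot all_order all_algebra.
From mathcomp Require Import reals complex.
From mathcomp Require Import ring.
Import Order.TTheory GRing.Theory Num.Theory.
Local Open Scope ring_scope.
Set Implicit Arguments. Unset Strict Implicit.

Section InnerProduct.
Variable R : realType.
Local Notation C := (R[i]).
Variables (H : lmodType C) (ip : H -> H -> C).
Hypothesis HH : hilbert_space ip.

Lemma ip0l z : ip 0 z = 0.
Proof.
case: HH => ipl _ _ _ _.
have := ipl 1 0 0 z; rewrite scale1r addr0 mul1r => E.
by apply: (@addrI _ (ip 0 z)); rewrite addr0 -E.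
Qed.

Lemma ipDl x y z : ip (x + y) z = ip x z + ip y z.
Proof. by case: HH => ipl _ _ _ _; rewrite -[x]scale1r ipl mul1r scale1r. Qed.

Lemma ipZl k x z : ip (k *: x) z = k * ip x z.
Proof. by case: HH => ipl _ _ _ _; rewrite -[k *: x]addr0 ipl ip0l addr0. Qed.

Lemma ipC x y : ip y x = (ip x y)^*.
Proof. by case: HH. Qed.

Lemma ipBl x y z : ip (x - y) z = ip x z - ip y z.
Proof. by rewrite ipDl -scaleN1r ipZl mulN1r. Qed.

Lemma ipDr x y z : ip z (x + y) = ip z x + ip z y.
Proof. by rewrite ipC ipDl rmorphD (ipC z x) (ipC z y) /= !conjCK. Qed.

Lemma ipZr k x z : ip z (k *: x) = k^* * ip z x.
Proof. by rewrite ipC ipZl rmorphM (ipC z x) /= conjCK. Qed.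

Lemma ipBr x y z : ip z (x - y) = ip z x - ip z y.
Proof. by rewrite ipC ipBl rmorphB (ipC z x) (ipC z y) /= !conjCK. Qed.

Lemma ip_ge0 x : 0 <= ip x x.
Proof. by case: HH. Qed.

Lemma ip_amgm x y (t : C) : 0 <= t ->
  2 * t * `|ip x y| <= ip x x + t ^+ 2 * ip y y.
Proof.
move=> t_ge0; have [->|xy_neq0] := eqVneq (ip x y) 0.
  by rewrite normr0 mulr0 addr_ge0 ?mulr_ge0 ?exprn_ge0 ?ip_ge0.
set z := ip x y; set n := `|z|.
have n_neq0 : n != 0 by rewrite normr_eq0.
have nC : n^* = n by apply/conj_Creal/normr_real.
have tC : t^* = t by apply/conj_Creal/ger0_real.
have zC : z^* = n ^+ 2 / z by rewrite normCK [z * _]mulrC mulfK.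
(* expand [0 <= <x - c y, x - c y>] for the phase-aligned [c = t z / |z|] *)
have := ip_ge0 (x - (t * z / n) *: y).
rewrite ipBl !ipBr !ipZl !ipZr -/z (ipC x y) -/z !rmorphM /= fmorphV /= nC tC zC.
have -> : ip x x - t * (n ^+ 2 / z) / n * z -
    (t * z / n * (n ^+ 2 / z) - t * z / n * (t * (n ^+ 2 / z) / n * ip y y)) =
    ip x x + t ^+ 2 * ip y y - 2 * t * n.
  by field; rewrite xy_neq0 n_neq0.
by rewrite subr_ge0.
Qed.

Lemma ip_le_sqr_of_hnorm_lt u (e : C) : 0 <= e -> hnorm ip u < e -> ip u u <= e ^+ 2.
Proof.
move=> e_ge0 lt_ue; rewrite -[ip u u]sqrtCK -/(hnorm ip u) !expr2.
by rewrite ler_pM ?sqrtC_ge0 ?ip_ge0 ?ltW.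
Qed.

End InnerProduct.

Section Neighbourhoods.
Variable R : realType.
Local Notation C := (R[i]).

Definition sn_nbhd (V : lmodType C) (I : Type) (q : I -> V -> C) (x : V)
    (P : V -> Prop) :=
  exists n (f : 'I_n -> I) (d : C), 0 < d /\ forall y, sn_ball q f d x y -> P y.

Variables (V : lmodType C) (I : Type) (q : I -> V -> C).

Lemma sn_nbhd_ball x n (f : 'I_n -> I) (d : C) : 0 < d -> sn_nbhd q x (sn_ball q f d x).
Proof. by move=> d_gt0; exists n, f, d. Qed.

Lemma sn_nbhd_mono x (P Q : V -> Prop) :
  (forall y, P y -> Q y) -> sn_nbhd q x P -> sn_nbhd q x Q.
Proof. by move=> PQ [n [f [d [d_gt0 Pd]]]]; exists n, f, d; split=> // y /Pd/PQ. Qed.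

Lemma sn_nbhdI x (P Q : V -> Prop) :
  sn_nbhd q x P -> sn_nbhd q x Q -> sn_nbhd q x (fun y => P y /\ Q y).
Proof.
move=> [n1 [f1 [d1 [d1_gt0 P1]]]] [n2 [f2 [d2 [d2_gt0 P2]]]].
pose f k := match split k with inl k1 => f1 k1 | inr k2 => f2 k2 end.
suff PQ d : d <= d1 -> d <= d2 -> 0 < d -> sn_nbhd q x (fun y => P y /\ Q y).
  have [le_d12|lt_d21] := real_leP (gtr0_real d1_gt0) (gtr0_real d2_gt0).
    exact: (PQ d1).
  exact: (PQ d2 (ltW lt_d21)).
move=> le_d1 le_d2 d_gt0; exists (n1 + n2)%N, f, d; split=> // y yd; split.
  apply: P1 => k; apply: lt_le_trans le_d1.
  by have := yd (lshift n2 k); rewrite /f (unsplitK (inl k)).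
apply: P2 => k; apply: lt_le_trans le_d2.
by have := yd (rshift n1 k); rewrite /f (unsplitK (inr k)).
Qed.

Lemma sn_nbhd_forall x m (P : 'I_m -> V -> Prop) :
  (forall k, sn_nbhd q x (P k)) -> sn_nbhd q x (fun y => forall k, P k y).
Proof.
elim: m P => [|m IHm] P nbP.
  have no_index : 'I_0 -> I by case.
  by exists 0%N, no_index, 1; split=> // y _ [].
apply: sn_nbhd_mono (sn_nbhdI (nbP ord0) (IHm _ (fun k => nbP (lift ord0 k)))).
by move=> y [P0 Plift] k; case: (unliftP ord0 k) => [k'|] ->.
Qed.

Lemma sn_dense_nbhd (V0 : lmodType C) (j : V0 -> V) x (P : V -> Prop) :
  sn_dense q j -> sn_nbhd q x P -> exists a, P (j a).
Proof.
move=> dense_j [n [f [d [d_gt0 Pd]]]].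
by have [a ja] := dense_j x n f d d_gt0; exists a; apply: Pd.
Qed.

Lemma eq_sn_dense (V0 : lmodType C) (j : V0 -> V) (F1 F2 : V -> C) :
  sn_dense q j -> sn_continuous_C q F1 -> sn_continuous_C q F2 ->
  (forall a, F1 (j a) = F2 (j a)) -> forall x, F1 x = F2 x.
Proof.
move=> dense_j F1c F2c eqF x; apply/eqP; rewrite -subr_eq0 -normr_eq0.
apply/negP => /negP neq0; set D := `|F1 x - F2 x| in neq0.
have D_gt0 : 0 < D by rewrite lt_def neq0 normr_ge0.
have D2_gt0 : 0 < D / 2 by rewrite divr_gt0.
have [a [lt1 lt2]] := sn_dense_nbhd dense_j (sn_nbhdI (F1c x _ D2_gt0) (F2c x _ D2_gt0)).
suff : D < D by rewrite ltxx.
rewrite {1}/D (_ : F1 x - F2 x = (F1 x - F1 (j a)) + (F2 (j a) - F2 x)); last first.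
  by rewrite eqF addrA subrK.
by rewrite [X in _ < X]splitr (le_lt_trans (ler_normD _ _)) // ltrD // distrC.
Qed.

End Neighbourhoods.

Section Continuity.
Variable R : realType.
Local Notation C := (R[i]).
Variables (U V : lmodType C) (I J : Type) (qU : I -> U -> C) (qV : J -> V -> C).

Lemma sn_continuous_comp (W : lmodType C) (K : Type) (qW : K -> W -> C)
    (g : U -> V) (h : V -> W) :
  sn_continuous qU qV g -> sn_continuous qV qW h ->
  sn_continuous qU qW (fun x => h (g x)).
Proof.
move=> gc hc x i e e_gt0; have [n [f [d [d_gt0 hd]]]] := hc (g x) i e e_gt0.
apply: sn_nbhd_mono (sn_nbhd_forall (fun k => gc x (f k) d d_gt0)).
by move=> y gy; apply: hd.
Qed.

Lemma sn_continuous_C_comp (g : U -> V) (h : V -> C) :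
  sn_continuous qU qV g -> sn_continuous_C qV h ->
  sn_continuous_C qU (fun x => h (g x)).
Proof.
move=> gc hc x e e_gt0; have [n [f [d [d_gt0 hd]]]] := hc (g x) e e_gt0.
apply: sn_nbhd_mono (sn_nbhd_forall (fun k => gc x (f k) d d_gt0)).
by move=> y gy; apply: hd.
Qed.

End Continuity.

Section Linear.
Variable R : realType.
Local Notation C := (R[i]).

Lemma clinear0 (V W : lmodType C) (f : V -> W) : clinear f -> f 0 = 0.
Proof.
move=> f_lin; have := f_lin 1 0 0; rewrite !scale1r addr0 => E.
by apply: (@addrI _ (f 0)); rewrite addr0 -E.
Qed.

Lemma clinearB (V W : lmodType C) (f : V -> W) :
  clinear f -> forall x y, f (x - y) = f x - f y.
Proof. by move=> f_lin x y; rewrite addrC -scaleN1r f_lin scaleN1r addrC. Qed.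

Lemma seminorm0 (V : lmodType C) (p : V -> C) : seminorm p -> p 0 = 0.
Proof. by case=> _ _ pZ; rewrite -(scale0r (0 : V)) pZ normr0 mul0r. Qed.

End Linear.

Lemma le8_of_amgm_bounds (F : numFieldType) (N P W x1 x2 x3 : F) :
  P <= 1 -> W <= 1 -> N <= 1 + x1 + x2 + x3 ->
  2 * 2 * x1 <= N + 2 ^+ 2 * P -> 2 * 1 * x2 <= P + 1 ^+ 2 * W ->
  2 * 2 * x3 <= N + 2 ^+ 2 * W -> N <= 8.
Proof.
move=> P_le1 W_le1 N_le x1_le x2_le x3_le.
have : 4 * N <= 2 * N + 16.
  apply: (@le_trans _ _ (4 * (1 + x1 + x2 + x3))); first by rewrite ler_wpM2l.
  apply: (@le_trans _ _ (4 + (N + 2 ^+ 2 * P) + 2 * (P + 1 ^+ 2 * W) + (N + 2 ^+ 2 * W))).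
    rewrite (_ : 4 * _ = 4 + 2 * 2 * x1 + 2 * (2 * 1 * x2) + 2 * 2 * x3); last by ring.
    by rewrite !lerD // ler_wpM2l.
  rewrite (_ : _ + (N + _) = 2 * N + (4 + 6 * P + 6 * W)); last by ring.
  rewrite lerD2l (_ : 16 = 4 + 6 * 1 + 6 * 1); last by ring.
  by rewrite !lerD // ler_wpM2l.
rewrite (_ : 4 * N = 2 * N + 2 * N); last by ring.
rewrite (_ : 16 = 2 * 8); last by ring.
by rewrite lerD2l ler_pM2l.
Qed.

Section WeakCommutant.
Variable R : realType.
Local Notation C := (R[i]).
Variables (A0 : algType C) (A H : lmodType C) (ip : H -> H -> C) (j : A0 -> A)
  (lam : A -> H) (invA : A -> A) (lm : A -> A0 -> A).

Lemma pi_weak_commutant_sub (S1 S2 : A -> Prop) (T : H -> H) :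
  (forall x, S1 x -> S2 x) ->
  pi_weak_commutant ip j lam invA lm S2 T -> pi_weak_commutant ip j lam invA lm S1 T.
Proof.
move=> S12 [T_bdd [Ts [T_adj commT]]]; split=> //.
by exists Ts; split=> // x /S12; apply: commT.
Qed.

End WeakCommutant.

Section GNS.
Variable R : realType.
Local Notation C := (R[i]).
Variables (A0 : algType C) (inv0 : A0 -> A0) (I : Type) (q : I -> A0 -> C)
  (A : lmodType C) (j : A0 -> A) (qA : I -> A -> C)
  (invA : A -> A) (lm : A -> A0 -> A) (rm : A0 -> A -> A).
Hypothesis HA : lc_quasi_star_algebra inv0 q j qA invA lm rm.
Variables (om0 : A0 -> C) (p : A0 -> C) (om : A -> C).
Hypotheses (Hp_sn : seminorm p) (Hp_cont : sn_continuous_C q p)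
  (Hom0_p : forall a, om0 (inv0 a * a) <= p a ^+ 2)
  (Hom_cont : sn_continuous_C qA om) (Hom_ext : forall a, om (j a) = om0 a).
Variables (H : lmodType C) (ip : H -> H -> C) (lam : A -> H).
Hypotheses (HH : hilbert_space ip) (Hlam_lin : clinear lam)
  (Hlam_dense : dense_in ip (fun a : A0 => lam (j a)))
  (Hlam_ip : forall (x : A) (a : A0), ip (lam x) (lam (j a)) = om (rm (inv0 a) x)).

Lemma om_rm_continuous c : sn_continuous_C qA (fun x => om (rm (inv0 c) x)).
Proof. exact: sn_continuous_C_comp (rm_cont HA (inv0 c)) Hom_cont. Qed.

Lemma om_rm0 c : om (rm (inv0 c) 0) = 0.
Proof. by rewrite -Hlam_ip clinear0 // ip0l. Qed.

Lemma ip_lam_j_le1 a : p a < 1 -> ip (lam (j a)) (lam (j a)) <= 1.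
Proof.
case: Hp_sn => p_ge0 _ _ lt_pa1.
rewrite Hlam_ip (rm_j HA) Hom_ext (le_trans (Hom0_p a)) //.
by rewrite exprn_ile1 ?p_ge0 ?ltW.
Qed.

Lemma ip_lam_bounded_nbhd0 : sn_nbhd qA 0 (fun z => ip (lam z) (lam z) <= 8).
Proof.
have [n [f [d [d_gt0 pd]]]] := Hp_cont 0 ltr01.
have d2_gt0 : 0 < d / 2 by rewrite divr_gt0.
apply: sn_nbhd_mono (sn_nbhd_ball qA 0 f d2_gt0) => z z_small.
have [c lt_zc] := Hlam_dense (lam z) ltr01.
set w := lam z - lam (j c) in lt_zc.
have [a [lt_Ga a_near]] := sn_dense_nbhd (A0_dense HA)
  (sn_nbhdI (om_rm_continuous c z ltr01) (sn_nbhd_ball qA z f d2_gt0)).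
have lt_pa1 : p a < 1.
  have := pd a; rewrite seminorm0 // subr0 ger0_norm; last by case: Hp_sn.
  apply=> k; rewrite subr0 -(qA_j HA).
  case: (qA_seminorm HA (f k)) => _ qA_tri _.
  rewrite -(subrK z (j a)) [d]splitr (le_lt_trans (qA_tri _ _)) // ltrD ?a_near //.
  by have := z_small k; rewrite subr0.
have N_le : ip (lam z) (lam z) <=
    1 + `|ip (lam (j a)) (lam z)| + `|ip (lam (j a)) w| + `|ip (lam z) w|.
  rewrite -[X in X <= _](ger0_norm (ip_ge0 HH (lam z))).
  rewrite {2}(_ : lam z = lam (j c) + w); last by rewrite /w addrC subrK.
  rewrite ipDr // (le_trans (ler_normD _ _)) // lerD // Hlam_ip.
  rewrite -(subrK (om (rm (inv0 c) (j a))) (om (rm (inv0 c) z))).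
  rewrite (le_trans (ler_normD _ _)) // -addrA lerD //; first by rewrite distrC ltW.
  rewrite -Hlam_ip (_ : lam (j c) = lam z - w); last by rewrite /w opprB addrC subrK.
  by rewrite ipBr // ler_normB.
have W_le1 : ip w w <= 1 by rewrite -(expr1n _ 2); apply: ip_le_sqr_of_hnorm_lt.
apply: (le8_of_amgm_bounds (ip_lam_j_le1 lt_pa1) W_le1 N_le).
- by rewrite ipC // norm_conjC ip_amgm // ler0n.
- exact: ip_amgm.
- by rewrite ip_amgm // ler0n.
Qed.

Lemma ip_lam_nbhd0 v (e : C) : 0 < e -> sn_nbhd qA 0 (fun z => `|ip (lam z) v| < e).
Proof.
move=> e_gt0; set e' := e / 9.
have e'_gt0 : 0 < e' by rewrite divr_gt0.
have e2_gt0 : 0 < e / 2 by rewrite divr_gt0.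
have [c lt_vc] := Hlam_dense v e'_gt0.
set u := v - lam (j c) in lt_vc.
have u_small : ip u u <= e' ^+ 2 by apply: ip_le_sqr_of_hnorm_lt; rewrite // ltW.
have G_small : sn_nbhd qA 0
    (fun z => `|om (rm (inv0 c) z) - om (rm (inv0 c) 0)| < e / 2).
  exact: om_rm_continuous.
apply: sn_nbhd_mono (sn_nbhdI G_small ip_lam_bounded_nbhd0) => z [lt_Gz N_le8].
rewrite om_rm0 subr0 in lt_Gz.
rewrite (_ : v = lam (j c) + u); last by rewrite /u addrC subrK.
rewrite ipDr // Hlam_ip (le_lt_trans (ler_normD _ _)) // [e]splitr ltr_leD //.
have e'2_gt0 : 0 < 2 * e' by rewrite mulr_gt0.
rewrite ipC // norm_conjC -(ler_pM2l e'2_gt0).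
rewrite (_ : 2 * e' * (e / 2) = e' ^+ 2 + e' ^+ 2 * 8); last by rewrite /e'; field.
rewrite (le_trans (ip_amgm HH _ _ (ltW e'_gt0))) // lerD //.
by rewrite ler_pM2l ?exprn_gt0.
Qed.

Lemma ip_lam_continuous v : sn_continuous_C qA (fun x => ip (lam x) v).
Proof.
move=> x e /(ip_lam_nbhd0 v) [n [f [d [d_gt0 small]]]]; exists n, f, d.
split=> // y yx; rewrite -ipBl // -clinearB //.
by apply: small => k; rewrite subr0; exact: yx.
Qed.

Lemma ip_lam_continuousr v : sn_continuous_C qA (fun x => ip v (lam x)).
Proof.
move=> x e /(ip_lam_nbhd0 v) [n [f [d [d_gt0 small]]]]; exists n, f, d.
split=> // y yx; rewrite -ipBr // -clinearB // ipC // norm_conjC.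
by apply: small => k; rewrite subr0; exact: yx.
Qed.

Lemma pi_weak_commutant_of_A0 (T : H -> H) :
  pi_weak_commutant ip j lam invA lm (fun x => exists a : A0, x = j a) T ->
  pi_weak_commutant ip j lam invA lm (fun _ => True) T.
Proof.
move=> [T_bdd [Ts [T_adj commT]]]; split=> //; exists Ts; split=> // x _ a b.
apply: (eq_sn_dense (A0_dense HA)
  (F1 := fun x => ip (lam (lm x a)) (Ts (lam (j b))))
  (F2 := fun x => ip (T (lam (j a))) (lam (lm (invA x) b)))).
- exact: sn_continuous_C_comp (lm_cont HA a) (ip_lam_continuous _).
- exact: sn_continuous_C_comp (sn_continuous_comp (invA_cont HA) (lm_cont HA b))
    (ip_lam_continuousr _).
- by move=> c; apply: commT; exists c.
Qed.

End GNS.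

Theorem proposition10 (R : realType)
  (* the locally convex quasi *-algebra (A, A0) with identity *)
  (A0 : algType R[i]) (inv0 : A0 -> A0) (I : Type) (q : I -> A0 -> R[i])
  (A : lmodType R[i]) (j : A0 -> A) (qA : I -> A -> R[i])
  (invA : A -> A) (lm : A -> A0 -> A) (rm : A0 -> A -> A)
  (HA : lc_quasi_star_algebra inv0 q j qA invA lm rm)
  (* omega0 : positive linear functional on A0 dominated by p^2 *)
  (om0 : A0 -> R[i]) (Hom0_lin : cfunctional om0)
  (Hom0_pos : forall a, 0 <= om0 (inv0 a * a))
  (p : A0 -> R[i]) (Hp_sn : seminorm p) (Hp_cont : sn_continuous_C q p)
  (Hom0_p : forall a, om0 (inv0 a * a) <= p a ^+ 2)
  (* omega : the continuous extension of omega0 to A *)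
  (om : A -> R[i]) (Hom_lin : cfunctional om) (Hom_cont : sn_continuous_C qA om)
  (Hom_ext : forall a, om (j a) = om0 a)
  (* GNS construction of omega *)
  (H : lmodType R[i]) (ip : H -> H -> R[i]) (HH : hilbert_space ip)
  (lam : A -> H) (Hlam_lin : clinear lam)
  (Hlam_dense : dense_in ip (fun a : A0 => lam (j a)))
  (Hlam_ip : forall (x : A) (a : A0), ip (lam x) (lam (j a)) = om (rm (inv0 a) x)) :
  forall T : H -> H,
    pi_weak_commutant ip j lam invA lm (fun _ => True) T <->
    pi_weak_commutant ip j lam invA lm (fun x => exists a : A0, x = j a) T.
Proof.
move=> T; split; first exact: pi_weak_commutant_sub.
exact: (pi_weak_commutant_of_A0 HA Hp_sn Hp_cont Hom0_p Hom_cont Hom_ext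
  HH Hlam_lin Hlam_dense Hlam_ip).
Qed.
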